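(* Let $\rho$ be a probability measure on subgraphs $G$ of $\mathbb Z^2$ invariant under translations (or a joint law of a subgraph $G$ and interactions $w\in\mathbb R^{E(\mathbb Z^2)}$ invariant under the diagonal action of translations), such that almost surely every vertex of $G$ is contained in only finitely many simple cycles of $G$. Then there exists a random subgraph $F$, jointly distributed with $G$ (and $w$), such that the marginal law of $G$ (resp. $(G,w)$) is $\rho$, the joint law of $(G,F)$ (resp. $(G,w,F)$) is translation invariant, and almost surely $F$ is a spanning forest of $G$ whose connected components are exactly the connected components of $G$ (i.e. $F\subseteq G$, $F$ has no cycles, and two vertices are connected in $F$ iff they are connected in $G$).
   Context: $\mathbb Z^2$ is the square lattice graph; translations of $\mathbb Z^2$ act on subgraphs and on edge-indexed interactions. A cycle is a closed path; it is simple if it has no self-intersections. *)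

From HB Require Import structures.
From mathcomp Require Import all_boot all_order all_algebra.
From mathcomp Require Import all_classical all_reals all_analysis.
Set Implicit Arguments. Unset Strict Implicit. Unset Printing Implicit Defensive.
Import Order.TTheory GRing.Theory Num.Theory.
Local Open Scope classical_set_scope.
Local Open Scope ring_scope.

Definition V := (int * int)%type.
(* edges: (v, false) is the horizontal edge {v, v + (1,0)},
          (v, true)  is the vertical   edge {v, v + (0,1)};
   this enumerates every edge of Z^2 exactly once. *)
Definition E := (V * bool)%type.

Definition esrc (e : E) : V := e.1.
Definition edst (e : E) : V :=
  if e.2 then (e.1.1, e.1.2 + 1) else (e.1.1 + 1, e.1.2).

(* a (spanning) subgraph of Z^2 is given by its edge set G : E -> bool *)
(* adjacency in the subgraph G (boolean, so that seq's path/cycle apply):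
   u ~ v iff some edge of G has endpoints {u, v} *)
Definition adj (G : E -> bool) : rel V := fun u v =>
  [|| G (u, false) && (v == edst (u, false)),
      G (u, true)  && (v == edst (u, true)),
      G (v, false) && (u == edst (v, false))
    | G (v, true)  && (u == edst (v, true))].

Definition simple_cycle (G : E -> bool) (c : seq V) : bool :=
  [&& 3 <= size c, uniq c & cycle (adj G) c]%N.

(* every vertex of G lies on only finitely many simple cycles of G
   (cycles counted as vertex sequences; this differs from counting
   cycles as subgraphs only by the finite factor 2n of rotations and
   reversals, so finiteness is the same) *)
Definition finitely_many_cycles (G : E -> bool) : Prop :=
  forall v : V, finite_set [set c : seq V | simple_cycle G c /\ v \in c].

Definition connected (G : E -> bool) (u v : V) : Prop :=
  exists p : seq V, path (adj G) u p /\ last u p = v.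

Definition acyclic (F : E -> bool) : Prop :=
  forall c : seq V, ~ simple_cycle F c.

Definition spanning_forest_of (G F : E -> bool) : Prop :=
  [/\ (forall e, F e -> G e),
      acyclic F &
      (forall u v : V, connected F u v <-> connected G u v)].

Definition cylinders d (M : measurableType d) : set (set (E -> M)) :=
  [set S | exists (e : E) (A : set M), measurable A /\
                                       S = (fun x => x e) @^-1` A].

Definition conf d (M : measurableType d) := g_sigma_algebraType (@cylinders d M).

Definition shift d (M : measurableType d) (a : V) (x : conf M) : conf M :=
  fun e => x ((e.1.1 + a.1, e.1.2 + a.2), e.2).

Definition translation_invariant d (M : measurableType d) (R : realType)
  (mu : probability (conf M) R) : Prop :=
  forall (a : V) (A : set (conf M)), measurable A ->
    mu (shift a @^-1` A) = mu A.

(* The statement of the lemma for labels in M, where gr : M -> bool reads off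
   from the label of an edge whether it belongs to G (M = bool, gr = id for
   the law of G alone; M = bool * R, gr = fst for the joint law of (G, w)).
   The random forest F is encoded by an extra boolean label per edge. *)
Definition forest_coupling_statement d (M : measurableType d) (gr : M -> bool)
  (R : realType) : Prop :=
  forall rho : probability (conf M) R,
    translation_invariant rho ->
    {ae rho, forall x : conf M, finitely_many_cycles (fun e => gr (x e))} ->
    exists mu : probability (conf (M * bool)%type) R,
      [/\ (forall A : set (conf M), measurable A ->
             mu ((fun (y : conf (M * bool)%type) (e : E) => (y e).1) @^-1` A)
             = rho A),
          translation_invariant mu &
          {ae mu, forall y : conf (M * bool)%type,
              spanning_forest_of (fun e => gr (y e).1) (fun e => (y e).2)}].

(* Fix a translation-invariant total order on the edges of Z^2 and delete from
   G every edge that is the largest edge of some simple cycle of G.  The result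
   F is a deterministic, translation-equivariant and measurable function of G,
   so pushing the law of G forward along G |-> (G, F) gives an invariant
   coupling.  F has no cycle: the largest edge of a cycle of F would have been
   deleted.  An edge uv deleted as the largest edge of a simple cycle c is
   bypassed by the path c - uv, whose edges are all smaller.  Every edge met in
   this recursion lies on a simple cycle through u, because a simple cycle
   through u and a simple cycle sharing an edge with it can be merged into a
   simple cycle through u containing any prescribed edge of the second one.
   When u lies on finitely many simple cycles these edges form a finite set,
   so the recursion terminates and u, v remain connected in F. *)

From Pilot Require Import Defs.
From HB Require Import structures.
From mathcomp Require Import all_boot all_order all_algebra.
From mathcomp Require Import all_classical all_reals all_analysis.
From mathcomp Require Import zify.
Set Implicit Arguments. Unset Strict Implicit. Unset Printing Implicit Defensive.
Import Order.TTheory GRing.Theory Num.Theory.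
Local Open Scope classical_set_scope.
Local Open Scope ring_scope.

(* mathcomp-analysis also defines [connected] and [shift]. *)
Notation connected := Defs.connected.
Notation shift := Defs.shift.

(** * Rerouting a path through a cycle *)

Section Rerouting.
Variables (T : eqType) (r : rel T).
Hypothesis r_sym : symmetric r.

Lemma cycle_consE (y : T) (Q : seq T) :
  cycle r (y :: Q) = path r y Q && r (last y Q) y.
Proof. by rewrite /= rcons_path. Qed.

Lemma size_gt1 (a y : T) (P : seq T) :
  a \in P -> a != last y P -> (1 < size P)%N.
Proof. by case: P => [|w [|w' P]] //; rewrite inE => /eqP ->; rewrite eqxx. Qed.

Lemma split_first (p : pred T) s : has p s ->
  exists s1 x s2, [/\ s = s1 ++ x :: s2, p x & ~~ has p s1].
Proof. by case/split_find => x s1 s2 px ps1; exists s1, x, s2; rewrite cat_rcons. Qed.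

Lemma split_last (p : pred T) s : has p s ->
  exists s1 x s2, [/\ s = s1 ++ x :: s2, p x & ~~ has p s2].
Proof.
rewrite -has_rev; move Es: (rev s) => s' ps'.
case/split_find: ps' Es => x s2 s1 px ps2 Es.
exists (rev s1), x, (rev s2); rewrite has_rev -[s]revK Es rev_cat rev_rcons.
by split.
Qed.

Lemma split_first_last (D : pred T) (L : seq T) (u v : T) :
  u \in L -> v \in L -> D u -> D v -> u != v ->
  exists L1 y M x L2,
    [/\ L = L1 ++ y :: M ++ x :: L2, D y, D x, ~~ has D L1 & ~~ has D L2].
Proof.
move=> uL vL Du Dv uv.
have [L1 [y [R [LE Dy DL1]]]] : exists L1 y R, [/\ L = L1 ++ y :: R, D y & ~~ has D L1].
  by apply: split_first; apply/hasP; exists u.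
have notL1 w : D w -> w \notin L1.
  by move=> Dw; apply: contra DL1 => wL1; apply/hasP; exists w.
have [w wL [Dw wy]] : exists2 w, w \in L & D w /\ w != y.
  case: (eqVneq u y) => [uy|uy]; first by exists v => //; rewrite -uy eq_sym.
  by exists u.
have /split_last [M [x [L2 [RE Dx DL2]]]] : has D R.
  apply/hasP; exists w => //; move: wL; rewrite LE mem_cat inE (negbTE (notL1 _ Dw)).
  by rewrite (negbTE wy).
by exists L1, y, M, x, L2; rewrite LE RE.
Qed.

Lemma cycle_arc (D : seq T) (y x a : T) : uniq D -> cycle r D ->
  y \in D -> x \in D -> a \in D -> y != x -> a != y -> a != x ->
  exists W, [/\ path r y W, last y W = x, uniq (y :: W), a \in W & {subset W <= D}].
Proof.
move=> uD cD yD xD aD yx ay ax.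
have [R DE] : exists R, rot (index y D) D = y :: R by eexists; apply: rot_index.
have uR : uniq (y :: R) by rewrite -DE rot_uniq.
have cR : cycle r (y :: R) by rewrite -DE rot_cycle.
have RD w : w \in y :: R -> w \in D by rewrite -DE mem_rot.
have inR w : w \in D -> w != y -> w \in R.
  by rewrite -(mem_rot (index y D)) DE inE => /orP [/eqP ->|]; rewrite ?eqxx.
have xR : x \in R by apply: inR; rewrite // eq_sym.
have aR : a \in R := inR a aD ay.
case/splitPr: xR uR cR RD aR => R1 R2 uR cR RD.
have /and3P [pR1 rR1x pR2] :
    [&& path r y R1, r (last y R1) x & path r x (rcons R2 y)].
  by move: cR; rewrite /= rcons_cat cat_path.
rewrite mem_cat inE (negbTE ax) orFb => /orP [aR1|aR2].
- exists (rcons R1 x); split.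
  + by rewrite rcons_path pR1.
  + by rewrite last_rcons.
  + apply: (subseq_uniq _ uR); rewrite -cats1 -!cat_cons; apply: cat_subseq => //.
    exact: prefix_subseq.
  + by rewrite mem_rcons inE aR1 orbT.
  + by move=> w; rewrite mem_rcons inE => /orP [/eqP ->|wR1]; apply: RD;
    rewrite inE mem_cat ?wR1 ?mem_head ?orbT.
- exists (rev (x :: R2)); split.
  + have := rev_path r x (rcons R2 y); rewrite last_rcons belast_rcons => ->.
    by apply: sub_path pR2 => w z; rewrite r_sym.
  + by rewrite rev_cons last_rcons.
  + rewrite cons_uniq mem_rev rev_uniq.
    move: uR; rewrite cons_uniq mem_cat negb_or cat_uniq.
    by case/andP => /andP [_ ->] /and3P [_ _ ->].
  + by rewrite mem_rev inE aR2 orbT.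
  + by move=> w; rewrite mem_rev => wR2; apply: RD; rewrite inE mem_cat wR2 !orbT.
Qed.

Lemma reroute_path (D L : seq T) (a u v : T) :
  uniq D -> cycle r D -> a \in D -> a \notin L -> sorted r L -> uniq L ->
  u \in L -> v \in L -> u \in D -> v \in D -> u != v ->
  exists L', [/\ sorted r L', uniq L', a \in L', head a L' = head a L
                & last a L' = last a L].
Proof.
move=> uD cD aD aL sL uL uinL vinL uinD vinD uv.
have [L1 [y [M [x [L2 [LE yD xD DL1 DL2]]]]]] :=
  split_first_last uinL vinL uinD vinD uv.
have yx : y != x.
  move: uL; rewrite LE cat_uniq cons_uniq mem_cat inE negb_or.
  by case/and3P => _ _ /andP [/andP [_ /norP []]].
have [ay ax] : a != y /\ a != x.
  by split; apply: contraNneq aL => ->; rewrite LE mem_cat inE ?mem_cat ?inE eqxx ?orbT.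
have [W [pW lW uW aW WD]] := cycle_arc uD cD yD xD aD yx ay ax.
exists (L1 ++ y :: W ++ L2); split.
- move: sL; rewrite LE !sorted_cat_cons !cat_path lW /= => /andP [-> /and3P [_ _ ->]].
  by rewrite pW.
- rewrite -cat1s (catA [:: y]) uniq_catCA cat_uniq cat1s uW andTb.
  have yWD w : w \in y :: W -> w \in D by rewrite inE => /orP [/eqP ->|/WD].
  apply/andP; split.
    apply/hasPn => w; rewrite mem_cat => wL; apply/negP => /yWD wD.
    by case/orP: wL => wL; [move: DL1 | move: DL2] => /hasPn /(_ w wL) /negP; apply.
  apply: subseq_uniq uL; rewrite LE; apply: cat_subseq => //.
  by rewrite -cat1s -(cat1s x) !catA; apply: suffix_subseq.
- by rewrite mem_cat inE mem_cat aW !orbT.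
- by rewrite LE; case: (L1).
- by rewrite LE !last_cat /= !last_cat lW.
Qed.
End Rerouting.

(** * Edges of the square lattice *)

Implicit Types (G H : E -> bool) (u v x y : V) (e f g h : E).

Definition neighbour (u v : V) : bool := adj (fun=> true) u v.

Definition edge_between (u v : V) : E :=
  if v == edst (u, false) then (u, false) else
  if v == edst (u, true) then (u, true) else
  if u == edst (v, false) then (v, false) else (v, true).

Definition joins (e : E) (u v : V) : Prop :=
  (esrc e, edst e) = (u, v) \/ (esrc e, edst e) = (v, u).

Lemma joins_inj e f u v : joins e u v -> joins f u v -> e = f.
Proof.
case: e f => [[p1 p2] b] [[q1 q2] c]; rewrite /joins /esrc /edst /=.
by case: b c => -[] [] [<- <-] [] [] ? ? ? ?; try congr (_, _, _); lia.
Qed.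

Lemma joins_ends e u v x y : joins e u v -> joins e x y ->
  (u = x /\ v = y) \/ (u = y /\ v = x).
Proof. by rewrite /joins => -[] -> -[] [-> ->]; [left|right|right|left]. Qed.

Lemma adj_sym G u v : adj G u v = adj G v u.
Proof. by rewrite /adj orbA orbC -!orbA. Qed.

Lemma adjP G u v : reflect (exists2 e, G e & joins e u v) (adj G u v).
Proof.
apply: (iffP idP) => [/or4P [] /andP [Ge /eqP ->] | [[p []] Ge [] [<- <-]]];
  rewrite /adj ?Ge ?eqxx ?orbT //.
all: by eexists; [exact: Ge | rewrite /joins; by [left|right]].
Qed.

Lemma sub_adj G H u v : (forall e, H e -> G e) -> adj H u v -> adj G u v.
Proof. by move=> HG /adjP [e /HG Ge J]; apply/adjP; exists e. Qed.

Lemma adj_neighbour G u v : adj G u v -> neighbour u v.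
Proof. exact: sub_adj. Qed.

Lemma edge_between_joins u v : neighbour u v -> joins (edge_between u v) u v.
Proof.
rewrite /neighbour /adj /edge_between /joins /esrc /=.
case: ifP => [/eqP -> _|_]; first by left.
case: ifP => [/eqP -> _|_]; first by left.
by case: ifP => [/eqP -> _|_ /eqP ->]; right.
Qed.

Lemma adjE G u v : neighbour u v -> adj G u v = G (edge_between u v).
Proof.
move=> /edge_between_joins J; apply/adjP/idP => [[e Ge /joins_inj /(_ J) <-] //|].
by exists (edge_between u v).
Qed.

Lemma edge_between_inj u v x y : neighbour u v -> neighbour x y ->
  edge_between u v = edge_between x y -> (u = x /\ v = y) \/ (u = y /\ v = x).
Proof.
move=> /edge_between_joins Juv /edge_between_joins + Exy.
by rewrite -Exy; apply: joins_ends.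
Qed.

Definition edge_key (e : E) : int *l (int *l bool) := (e.1.1, (e.1.2, e.2)).

Definition edge_lt (e f : E) : bool := (edge_key e < edge_key f)%O.

Lemma edge_lt_irr e : ~~ edge_lt e e.
Proof. by rewrite /edge_lt ltxx. Qed.

Lemma edge_lt_trans e f g : edge_lt e f -> edge_lt f g -> edge_lt e g.
Proof. exact: lt_trans. Qed.

Lemma edge_lt_total e f : e != f -> edge_lt e f || edge_lt f e.
Proof.
move=> ef; apply: lt_total; apply: contra ef => /eqP.
by case: e f => [[? ?] ?] [[? ?] ?] [-> -> ->].
Qed.

Lemma exists_edge_lt_max (s : seq E) : s != [::] ->
  exists2 m, m \in s & all (fun f => ~~ edge_lt m f) s.
Proof.
elim: s => [//|x s IH] _; case: (eqVneq s [::]) => [->|/IH [m ms mmax]].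
  by exists x; rewrite ?mem_head //= edge_lt_irr.
case: (boolP (edge_lt m x)) => mx.
  exists x; rewrite ?mem_head //= edge_lt_irr; apply/allP => f fs.
  by apply/negP => xf; move/allP: mmax => /(_ f fs); rewrite (edge_lt_trans mx xf).
by exists m; rewrite /= ?inE ?ms ?orbT ?mx.
Qed.

Lemma count_edge_lt_mono (s : seq E) g h : g \in s -> edge_lt g h ->
  (count (edge_lt^~ g) s < count (edge_lt^~ h) s)%N.
Proof.
move=> + gh; elim: s => [//|f s IH] /=; rewrite inE => /orP [/eqP <- | gs].
  rewrite (negbTE (edge_lt_irr g)) gh add0n add1n ltnS.
  by apply: sub_count => f' /= /edge_lt_trans; apply.
rewrite -addnS; apply: leq_add; last exact: IH.
by case: (boolP (edge_lt f g)) => // /edge_lt_trans ->.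
Qed.

Fixpoint path_edges x (p : seq V) : seq E :=
  if p is y :: q then edge_between x y :: path_edges y q else [::].

Definition cycle_edges (c : seq V) : seq E :=
  if c is x :: p then path_edges (last x p) c else [::].

Lemma path_edges_cat x p1 p2 :
  path_edges x (p1 ++ p2) = path_edges x p1 ++ path_edges (last x p1) p2.
Proof. by elim: p1 x => [|y p1 IH] x //=; rewrite IH. Qed.

Lemma size_path_edges x p : size (path_edges x p) = size p.
Proof. by elim: p x => [|y p IH] x //=; rewrite IH. Qed.

Lemma size_cycle_edges c : size (cycle_edges c) = size c.
Proof. by case: c => [|x p] //=; rewrite size_path_edges. Qed.

Lemma cycle_edges_rot n c : cycle_edges (rot n c) = rot n (cycle_edges c).
Proof.
have rot1E d : cycle_edges (rot 1 d) = rot 1 (cycle_edges d).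
  case: d => [//|x [|z p]] //; rewrite rot1_cons /= rot1_cons /= last_rcons.
  by rewrite -cats1 path_edges_cat /= cats1.
elim: n => [|n IH]; first by rewrite !rot0.
have [lt_nc|le_cn] := ltnP n (size c).
  by rewrite rotS // rot1E IH -rotS // size_cycle_edges.
by rewrite !rot_oversize ?size_cycle_edges // ltnW.
Qed.

Lemma mem_path_edges (r : rel V) x p g : path r x p -> g \in path_edges x p ->
  exists u v p1 p2, [/\ g = edge_between u v, r u v & x :: p = p1 ++ u :: v :: p2].
Proof.
elim: p x => [//|y q IH] x /= /andP [rxy pq]; rewrite inE => /orP [/eqP ->|gq].
  by exists x, y, [::], q.
have [u [v [p1 [p2 [-> ruv e]]]]] := IH _ pq gq.
by exists u, v, (x :: p1), p2; rewrite e.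
Qed.

Lemma mem_cycle_edges G c g : cycle (adj G) c -> g \in cycle_edges c ->
  exists u v, [/\ g = edge_between u v, adj G u v, u \in c & v \in c].
Proof.
case: c => [//|x p] cyc gc; rewrite (cycle_path x) in cyc.
have [u [v [p1 [p2 [-> auv e]]]]] := mem_path_edges cyc gc.
have sub_c w : w \in last x p :: x :: p -> w \in x :: p.
  by rewrite inE => /orP [/eqP ->|//]; apply: mem_last.
by exists u, v; split => //; apply: sub_c; rewrite e mem_cat !inE eqxx ?orbT.
Qed.

Lemma cycle_edge_ends G c u v : cycle (adj G) c -> neighbour u v ->
  edge_between u v \in cycle_edges c -> u \in c /\ v \in c.
Proof.
move=> cyc nuv /(mem_cycle_edges cyc) [x [y [e axy xc yc]]].
by have [[-> ->]|[-> ->]] := edge_between_inj nuv (adj_neighbour axy) e.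
Qed.

Lemma cycle_edges_sub G c g : cycle (adj G) c -> g \in cycle_edges c -> G g.
Proof.
move=> cyc /(mem_cycle_edges cyc) [u [v [-> auv _ _]]].
by rewrite -adjE ?(adj_neighbour auv).
Qed.

Lemma connected_refl G u : connected G u u.
Proof. by exists [::]. Qed.

Lemma connected_trans G u v w : connected G u v -> connected G v w -> connected G u w.
Proof.
move=> [p [pp lp]] [q [pq lq]]; exists (p ++ q).
by rewrite cat_path last_cat lp pp pq.
Qed.

Lemma connected_sym G u v : connected G u v -> connected G v u.
Proof.
move=> [p [pp lp]]; exists (rev (belast u p)); split.
  by rewrite -lp rev_path; apply: sub_path pp => x y; rewrite adj_sym.
by case: p pp lp => [|y p] _ /= <- //; rewrite rev_cons last_rcons.
Qed.

Lemma adj_connected G u v : adj G u v -> connected G u v.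
Proof. by move=> auv; exists [:: v]; rewrite /= auv. Qed.

Lemma sub_connected G H u v : (forall e, H e -> G e) ->
  connected H u v -> connected G u v.
Proof.
by move=> HG [p [pp lp]]; exists p; split => //; apply: sub_path pp => x y; apply: sub_adj.
Qed.

Lemma connected_path G H x p : path (adj G) x p ->
  (forall u v, adj G u v -> edge_between u v \in path_edges x p -> connected H u v) ->
  connected H x (last x p).
Proof.
elim: p x => [|y p IH] x /=; first by move=> *; apply: connected_refl.
move=> /andP [axy pp] Hp; apply: connected_trans (IH y pp _).
  by apply: Hp; rewrite ?mem_head.
by move=> u v auv e; apply: Hp; rewrite // inE e orbT.
Qed.

(** * The forest of edges that are not the largest on any simple cycle *)

Definition cycle_max (c : seq V) e : bool :=
  (e \in cycle_edges c) && all (fun f => ~~ edge_lt e f) (cycle_edges c).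

Definition forest_of G e : bool :=
  G e && ~~ `[< exists c, simple_cycle G c && cycle_max c e >].

Lemma forest_of_sub G e : forest_of G e -> G e.
Proof. by case/andP. Qed.

Lemma cycle_max_of_not_forest G u v : adj G u v -> ~~ forest_of G (edge_between u v) ->
  exists2 c, simple_cycle G c & cycle_max c (edge_between u v).
Proof.
move=> auv; rewrite /forest_of -adjE ?(adj_neighbour auv) // auv /= negbK.
by move=> /asboolP [c /andP [sc mc]]; exists c.
Qed.

Lemma forest_of_acyclic G : acyclic (forest_of G).
Proof.
move=> c /and3P [c3 uc cF].
have cG : cycle (adj G) c.
  by apply: sub_cycle cF => u v; apply: sub_adj => e /forest_of_sub.
have ne : cycle_edges c != [::] by rewrite -size_eq0 size_cycle_edges; case: (c) c3.
have [m mc mmax] := exists_edge_lt_max ne.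
have /andP [_ /asboolPn] := cycle_edges_sub cF mc; apply.
by exists c; rewrite /simple_cycle c3 uc cG /cycle_max mc mmax.
Qed.

Lemma simple_cycle_rot_closing G c g : simple_cycle G c -> g \in cycle_edges c ->
  exists y Q, [/\ simple_cycle G (y :: Q), g = edge_between (last y Q) y,
                  y :: Q =i c & cycle_edges (y :: Q) =i cycle_edges c].
Proof.
move=> sc gc; have := rot_index gc; rewrite -cycle_edges_rot.
case cE: (rot (index g (cycle_edges c)) c) => [|y Q] // [gE _].
exists y, Q; split => //; rewrite -cE.
- by rewrite /simple_cycle size_rot rot_uniq rot_cycle.
- exact: mem_rot.
- by move=> f; rewrite cycle_edges_rot mem_rot.
Qed.

Lemma closing_edge_notin_path G y Q g : simple_cycle G (y :: Q) ->
  g \in path_edges y Q -> g != edge_between (last y Q) y.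
Proof.
case/and3P => Q2 /andP [yQ uQ]; rewrite cycle_consE => /andP [pQ axy] gQ.
have [u [v [p1 [p2 [-> auv QE]]]]] := mem_path_edges pQ gQ.
have vQ : v \in Q.
  by case: p1 QE => [|z p1] [_ ->]; rewrite ?mem_head // mem_cat !inE eqxx !orbT.
apply/eqP => /(edge_between_inj (adj_neighbour auv) (adj_neighbour axy)).
case=> [[_ vy]|[uy vx]].
  by move: yQ; rewrite -vy vQ.
case: p1 QE => [|z p1] [yE QE].
  move: Q2 uQ vx; rewrite {}QE; case: p2 => [//|w p2] _ /andP [vp2 _] /=.
  by move=> vE; move: vp2; rewrite {1}vE mem_last.
by move: yQ; rewrite -uy QE mem_cat mem_head orbT.
Qed.

Lemma connected_cycle_edge G H c u v : simple_cycle G c -> neighbour u v ->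
  edge_between u v \in cycle_edges c ->
  (forall x y, adj G x y -> edge_between x y \in cycle_edges c ->
     edge_between x y != edge_between u v -> connected H x y) ->
  connected H u v.
Proof.
move=> sc nuv ec Hc.
have [y [Q [sQ eE _ eQ]]] := simple_cycle_rot_closing sc ec.
have /and3P [_ _] := sQ; rewrite cycle_consE => /andP [pQ axy].
have cyx : connected H y (last y Q).
  apply: connected_path pQ _ => x z axz xzQ; apply: Hc => //.
    by rewrite -eQ /= inE xzQ orbT.
  by rewrite eE; apply: closing_edge_notin_path sQ xzQ.
have [[-> ->]|[-> ->]] := edge_between_inj nuv (adj_neighbour axy) eE; last exact: cyx.
exact: connected_sym.
Qed.

Lemma simple_cycle_of_path G y P : path (adj G) y P -> adj G (last y P) y ->
  uniq (y :: P) -> (1 < size P)%N -> simple_cycle G (y :: P).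
Proof. by move=> pP aPy uP P2; rewrite /simple_cycle cycle_consE pP aPy uP !andbT. Qed.

Lemma cycle_through_edge G D c a g h :
  simple_cycle G D -> a \in D -> h \in cycle_edges D ->
  simple_cycle G c -> h \in cycle_edges c -> g \in cycle_edges c ->
  exists2 D', simple_cycle G D' & a \in D' /\ g \in cycle_edges D'.
Proof.
move=> sD aD hD sc hc gc.
have [ac|anc] := boolP (a \in c); first by exists c.
have [->|gh] := eqVneq g h; first by exists D.
(* Make g the closing edge of c, then reroute the rest of c through the arc of
   D that contains a. *)
have [y [Q [sQ gE cQ eQ]]] := simple_cycle_rot_closing sc gc.
have /and3P [Q2 uQ] := sQ; rewrite cycle_consE => /andP [pQ axy].
have hQ : h \in path_edges y Q.
  by move: hc; rewrite -eQ /= inE -gE eq_sym (negbTE gh).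
have [u [v [p1 [p2 [hE auv QE]]]]] := mem_path_edges pQ hQ.
have /and3P [_ uD cD] := sD.
have [uinD vinD] : u \in D /\ v \in D.
  by apply: (cycle_edge_ends cD (adj_neighbour auv)); rewrite -hE.
have uv : u != v.
  by move: uQ; rewrite QE cat_uniq /= inE => /and3P [_ _ /andP [/norP []]].
have uQ' : u \in y :: Q by rewrite QE mem_cat !inE eqxx ?orbT.
have vQ' : v \in y :: Q by rewrite QE mem_cat !inE eqxx !orbT.
have aQ : a \notin y :: Q by rewrite cQ.
have [[|z P] [sP uP aP /= zy lP]] :=
  reroute_path (@adj_sym G) uD cD aD aQ pQ uQ uQ' vQ' uinD vinD uv; first by [].
rewrite {}zy in sP uP aP lP *.
exists (y :: P); last by split; rewrite // gE /= -lP mem_head.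
apply: simple_cycle_of_path => //; first by rewrite lP.
have ax : a != last y P by rewrite lP; apply: contraNneq aQ => ->; apply: mem_last.
apply: (size_gt1 _ ax); move: aP; rewrite inE => /orP [/eqP ay|//].
by move: aQ; rewrite -ay mem_head.
Qed.

Lemma finite_cycle_edges_through G a : finitely_many_cycles G ->
  exists s : seq E, forall g,
    g \in s <-> exists2 D, simple_cycle G D & a \in D /\ g \in cycle_edges D.
Proof.
move=> /(_ a) /finite_seqP [cs csE]; exists (flatten (map cycle_edges cs)) => g.
split => [/flattenP [_ /mapP [D Dcs ->] gD] | [D sD [aD gD]]].
  have : [set` cs] D by []. 
  by rewrite -csE => -[sD aD]; exists D.
apply/flattenP; exists (cycle_edges D) => //; apply/mapP; exists D => //.
by have : [set c | simple_cycle G c /\ a \in c] D by []; rewrite csE.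
Qed.

Lemma forest_of_connected_adj G a b : finitely_many_cycles G -> adj G a b ->
  connected (forest_of G) a b.
Proof.
move=> fG aab; have [s sE] := finite_cycle_edges_through a fG.
pose rank g := count (edge_lt^~ g) s.
suff IH n u v : (rank (edge_between u v) < n)%N -> adj G u v ->
    edge_between u v \in s -> connected (forest_of G) u v.
  have [Fab|/(cycle_max_of_not_forest aab) [c sc /andP [abc _]]] :=
    boolP (forest_of G (edge_between a b)).
    by apply: adj_connected; rewrite adjE ?(adj_neighbour aab).
  apply: (IH (rank _).+1) => //; apply/sE; exists c => //; split => //.
  by have /and3P [_ _ /cycle_edge_ends /(_ (adj_neighbour aab) abc) []] := sc.
elim: n u v => [//|n IHn] u v; rewrite ltnS => rk auv uvs.
have nuv := adj_neighbour auv.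
have [Fuv|/(cycle_max_of_not_forest auv) [c sc /andP [uvc cmax]]] :=
  boolP (forest_of G (edge_between u v)).
  by apply: adj_connected; rewrite adjE.
apply: (connected_cycle_edge sc nuv uvc) => x y axy xyc xyuv.
have lt_xy_uv : edge_lt (edge_between x y) (edge_between u v).
  move: (edge_lt_total xyuv); move/allP: cmax => /(_ _ xyc) /negbTE ->.
  by rewrite orbF.
have xys : edge_between x y \in s.
  have [D sD [aD uvD]] := (sE _).1 uvs.
  by apply/sE; apply: cycle_through_edge sD aD uvD sc uvc xyc.
by apply: IHn => //; apply: leq_trans (count_edge_lt_mono xys lt_xy_uv) rk.
Qed.

Theorem forest_of_spanning G : finitely_many_cycles G ->
  spanning_forest_of G (forest_of G).
Proof.
move=> fG; split; [exact: forest_of_sub | exact: forest_of_acyclic | move=> u v; split].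
  exact: sub_connected (@forest_of_sub G).
move=> [p [pp <-]]; elim: p u pp => [|w p IH] u /=.
  by move=> _; apply: connected_refl.
case/andP => auw pw.
exact: connected_trans (forest_of_connected_adj fG auw) (IH w pw).
Qed.

(** * Translations *)

Definition vshift (a v : V) : V := (v.1 + a.1, v.2 + a.2).

Definition eshift (a : V) e : E := (vshift a e.1, e.2).

Lemma vshift_inj a : injective (vshift a).
Proof. by move=> [x1 x2] [y1 y2] [/addIr -> /addIr ->]. Qed.

Lemma eshift_inj a : injective (eshift a).
Proof. by move=> [[x1 x2] b] [[y1 y2] c] [/addIr -> /addIr -> ->]. Qed.

Lemma vshiftK a : cancel (vshift (- a.1, - a.2)) (vshift a).
Proof. by case=> x y; rewrite /vshift /= !addrNK. Qed.

Lemma edst_eshift a e : edst (eshift a e) = vshift a (edst e).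
Proof. by case: e => [[x y] []]; rewrite /edst /vshift /= addrAC. Qed.

Lemma eq_vshift_edst a u v b :
  (vshift a u == edst (vshift a v, b)) = (u == edst (v, b)).
Proof.
by rewrite -[(vshift a v, b)]/(eshift a (v, b)) edst_eshift (inj_eq (@vshift_inj a)).
Qed.

Lemma adj_shift G a u v : adj (G \o eshift a) u v = adj G (vshift a u) (vshift a v).
Proof. by rewrite /adj !eq_vshift_edst. Qed.

Lemma edge_between_shift a u v :
  edge_between (vshift a u) (vshift a v) = eshift a (edge_between u v).
Proof.
rewrite /edge_between (eq_vshift_edst a v u false) (eq_vshift_edst a v u true).
rewrite (eq_vshift_edst a u v false).
by case: ifP => // _; case: ifP => // _; case: ifP.
Qed.

Lemma cycle_edges_shift a c :
  cycle_edges (map (vshift a) c) = map (eshift a) (cycle_edges c).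
Proof.
case: c => [//|x p] /=; rewrite last_map; move: (last x p) => y.
by elim: p x y => [|z p IH] x y /=; rewrite edge_between_shift // IH.
Qed.

Lemma edge_lt_shift a e f : edge_lt (eshift a e) (eshift a f) = edge_lt e f.
Proof. by rewrite /edge_lt /edge_key /= !ltxi_pair !lerD2r. Qed.

Lemma simple_cycle_shift G a c :
  simple_cycle (G \o eshift a) c = simple_cycle G (map (vshift a) c).
Proof.
rewrite /simple_cycle size_map (map_inj_uniq (@vshift_inj a)) cycle_map.
by congr [&& _, _ & _]; apply: eq_cycle => u v /=; rewrite adj_shift.
Qed.

Lemma cycle_max_shift a c e :
  cycle_max (map (vshift a) c) (eshift a e) = cycle_max c e.
Proof.
rewrite /cycle_max cycle_edges_shift (mem_map (@eshift_inj a)) all_map.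
by congr (_ && _); apply: eq_all => f /=; rewrite edge_lt_shift.
Qed.

Lemma forest_of_shift G a e : forest_of (G \o eshift a) e = forest_of G (eshift a e).
Proof.
rewrite /forest_of; congr (_ && ~~ _); apply: asbool_equiv_eq; split.
  move=> [c /andP [sc mc]]; exists (map (vshift a) c).
  by rewrite -simple_cycle_shift sc cycle_max_shift.
move=> [c /andP [sc mc]]; exists (map (vshift (- a.1, - a.2)) c).
have cK : map (vshift a) (map (vshift (- a.1, - a.2)) c) = c.
  by rewrite -map_comp map_id_in // => v _ /=; rewrite vshiftK.
by rewrite simple_cycle_shift -(cycle_max_shift a) cK sc.
Qed.

(** * Measurability *)

Lemma measurable_bool_cases d (T : measurableType d) (h : T -> bool)
    (P : bool -> set T) :
  measurable [set x : T | h x] -> (forall b, measurable (P b)) ->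
  measurable [set x : T | P (h x) x].
Proof.
move=> mh mP.
have -> : [set x : T | P (h x) x] =
    ([set x : T | h x] `&` P true) `|` (~` [set x : T | h x] `&` P false).
  apply/seteqP; split => x /=; first by case: (h x); [left|right].
  by case=> -[] => [-> | /negP/negbTE ->].
by apply: measurableU; apply: measurableI => //; apply: measurableC.
Qed.

Lemma ae_pushforward_section d1 d2 (T1 : measurableType d1)
    (T2 : measurableType d2) (R : realType) (mu : set T1 -> \bar R)
    (f : T1 -> T2) (g : T2 -> T1) (P : T2 -> Prop) :
  measurable_fun setT g -> cancel f g -> measurable [set y : T2 | f (g y) = y] ->
  {ae mu, forall x : T1, P (f x)} -> {ae pushforward mu f, forall y : T2, P y}.
Proof.
move=> mg fK mfix [N [mN N0 PN]].
exists (~` [set y : T2 | f (g y) = y] `|` g @^-1` N); split.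
- apply: measurableU; first exact: measurableC.
  by rewrite -[_ @^-1` _]setTI; apply: mg.
- rewrite /pushforward.
  suff -> : f @^-1` (~` [set y : T2 | f (g y) = y] `|` g @^-1` N) = N by [].
  by apply/seteqP; split => x /=; rewrite fK; [case=> // /(_ erefl) | right].
- move=> y /= nPy; have [fgy|] := pselect (f (g y) = y); last by left.
  by right; apply: PN => /=; rewrite fgy.
Qed.

Definition vertex_edges (c : seq V) : seq E :=
  [seq (u, b) | u <- c, b <- [:: false; true]].

Lemma simple_cycle_local (G H : E -> bool) c : {in vertex_edges c, G =1 H} ->
  simple_cycle G c = simple_cycle H c.
Proof.
move=> GH; rewrite /simple_cycle; congr [&& _, _ & _].
apply: (@eq_in_cycle _ (mem c)); last by apply/allP.
by move=> u v uc vc; rewrite /adj !GH //; apply: allpairs_f; rewrite ?inE ?eqxx ?orbT.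
Qed.

Section Configurations.
Context d (M : measurableType d).

Lemma measurable_cylinder e (A : set M) :
  measurable A -> measurable [set x : conf M | A (x e)].
Proof. by move=> mA; apply: sub_sigma_algebra; exists e, A. Qed.

Lemma measurable_conf_map d' (M' : measurableType d') (f : M -> M') :
  measurable_fun setT f ->
  measurable_fun setT (fun x : conf M => (fun e => f (x e)) : conf M').
Proof.
move=> mf.
apply: (@measurability _ _ (conf M) (conf M') setT _ (@cylinders _ M')) => //.
move=> _ [_ [e [A [mA ->]]] <-]; rewrite setTI.
apply: (measurable_cylinder e (A := f @^-1` A)).
by rewrite -[_ @^-1` _]setTI; apply: mf.
Qed.

Variable gr : M -> bool.
Hypothesis mgr : measurable_fun setT gr.

Lemma measurable_edge_present e : measurable [set x : conf M | gr (x e)].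
Proof.
apply: (measurable_cylinder e (A := gr @^-1` [set true])).
by rewrite -[X in measurable X]setTI; apply: mgr.
Qed.

Lemma measurable_finitely_determined (es : seq E) (B : (E -> bool) -> bool) :
  (forall G H, {in es, G =1 H} -> B G = B H) ->
  measurable [set x : conf M | B (fun e => gr (x e))].
Proof.
elim: es B => [|e es IH] B hB.
  have hB0 G : B G = B (fun=> true) by apply: hB => f; rewrite in_nil.
  have -> : [set x : conf M | B (fun e => gr (x e))] =
      if B (fun=> true) then setT else set0.
    by apply/seteqP; split => x /=; rewrite hB0; case: (B _).
  by case: (B _); [exact: measurableT | exact: measurable0].
pose Bb b G := B (fun f => if f == e then b else G f).
have BE (x : conf M) : B (fun f => gr (x f)) = Bb (gr (x e)) (fun f => gr (x f)).
  by apply: hB => f _ /=; case: eqP => [->|].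
have -> : [set x : conf M | B (fun f => gr (x f))] =
    [set x | [set y : conf M | Bb (gr (x e)) (fun f => gr (y f))] x].
  by apply/seteqP; split => x /=; rewrite BE.
apply: (measurable_bool_cases (h := fun x : conf M => gr (x e))
  (P := fun b => [set y : conf M | Bb b (fun f => gr (y f))])) => [|b].
  exact: measurable_edge_present.
apply: IH => G H GH; apply: hB => f; rewrite inE.
by case: eqP => //= _; apply: GH.
Qed.

Lemma measurable_forest_edge e :
  measurable [set x : conf M | forest_of (fun f => gr (x f)) e].
Proof.
have -> : [set x : conf M | forest_of (fun f => gr (x f)) e] =
    [set x | gr (x e)] `&` ~` \bigcup_(c : seq V)
      [set x | simple_cycle (fun f => gr (x f)) c && cycle_max c e].
  apply/seteqP; split => x /=; rewrite /forest_of.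
    by case/andP => -> /asboolPn nc; split => // -[c _ hc]; apply: nc; exists c.
  move=> [-> nc]; apply/andP; split => //.
  by apply/asboolPn => -[c hc]; apply: nc; exists c.
apply: measurableI; first exact: measurable_edge_present.
apply: measurableC; apply: countable_bigcupT_measurable => [|c]; first exact: countableP.
apply: (measurable_finitely_determined (es := vertex_edges c)
  (B := fun G => simple_cycle G c && cycle_max c e)).
by move=> G H GH; rewrite (simple_cycle_local GH).
Qed.

Definition forest_lift (x : conf M) : conf (M * bool)%type :=
  fun e => (x e, forest_of (fun f => gr (x f)) e).

Lemma measurable_forest_lift : measurable_fun setT forest_lift.
Proof.
apply: (@measurability _ _ (conf M) (conf (M * bool)%type) setT _
  (@cylinders _ (M * bool)%type)) => //.
move=> _ [_ [e [A [mA ->]]] <-]; rewrite setTI.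
apply: (measurable_bool_cases (h := fun x : conf M => forest_of (fun f => gr (x f)) e)
  (P := fun b => [set x : conf M | A (x e, b)])) => [|b].
  exact: measurable_forest_edge.
apply: (measurable_cylinder e (A := pair^~ b @^-1` A)).
by rewrite -[X in measurable X]setTI; apply: pair2_measurable.
Qed.

Lemma forest_lift_shift a (x : conf M) :
  forest_lift (shift a x) = shift a (forest_lift x).
Proof.
by apply/funext => e; rewrite /forest_lift (forest_of_shift (fun f => gr (x f)) a e).
Qed.

End Configurations.

Lemma measurable_forest_lift_fixed d (M : measurableType d) (gr : M -> bool) :
  measurable_fun setT gr ->
  measurable [set y : conf (M * bool)%type | forest_lift gr (fun e => (y e).1) = y].
Proof.
move=> mgr; have mgr1 : measurable_fun setT (fun p : M * bool => gr p.1).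
  exact: measurableT_comp mgr measurable_fst.
have -> : [set y : conf (M * bool)%type | forest_lift gr (fun e => (y e).1) = y] =
    ~` \bigcup_e ~` [set y | (y e).2 = forest_of (fun f => gr (y f).1) e].
  apply/seteqP; split => y /=; first by move=> yE [e _]; apply; rewrite -yE.
  move=> yE; apply/funext => e; rewrite /forest_lift /=.
  have <- : (y e).2 = forest_of (fun f => gr (y f).1) e.
    by apply: contra_notP yE => ne; exists e.
  by case: (y e).
apply: measurableC; apply: countable_bigcupT_measurable => [|e]; first exact: countableP.
apply: measurableC.
apply: (measurable_bool_cases
  (h := fun y : conf (M * bool)%type => forest_of (fun f => gr (y f).1) e)
  (P := fun b => [set y : conf (M * bool)%type | (y e).2 = b])) => [|b].
  exact: measurable_forest_edge mgr1 e.
apply: (measurable_cylinder e (A := snd @^-1` [set b])).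
by rewrite -[X in measurable X]setTI; apply: measurable_snd.
Qed.

Theorem forest_coupling d (M : measurableType d) (gr : M -> bool) (R : realType) :
  measurable_fun setT gr -> forest_coupling_statement gr R.
Proof.
move=> mgr rho rho_inv rho_fin; have mlift := measurable_forest_lift mgr.
exists (distribution rho (mfun_Sub (mem_set mlift))); split => //.
- move=> a A mA.
  change (rho (forest_lift gr @^-1` (shift a @^-1` A)) = rho (forest_lift gr @^-1` A)).
  have -> : forest_lift gr @^-1` (shift a @^-1` A) = shift a @^-1` (forest_lift gr @^-1` A).
    by apply/seteqP; split => x; rewrite /preimage /= forest_lift_shift.
  by rewrite rho_inv // -[X in measurable X]setTI; apply: mlift.
- apply: (ae_pushforward_section (mu := rho) (f := forest_lift gr)
    (g := fun (y : conf (M * bool)%type) e => (y e).1)).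
  + exact: measurable_conf_map measurable_fst.
  + by [].
  + exact: measurable_forest_lift_fixed.
  + by apply: filterS rho_fin => x; apply: forest_of_spanning.
Qed.

Theorem lemma2p7 (R : realType) :
  (* version for a translation-invariant law of G alone *)
  forest_coupling_statement (fun b : bool => b) R /\
  (* version for a jointly translation-invariant law of (G, w), w in R^{E(Z^2)} *)
  forest_coupling_statement (fun p : bool * R => p.1) R.
Proof.
by split; apply: forest_coupling; [exact: measurable_id | exact: measurable_fst].
Qed.
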